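(* Let $P$ be a Banach measure on $\mathbf{N}$. Define $g:\mathbf{N}\times\mathbf{N}\to\mathbb{R}$ by $g(\omega_1,\omega_2)=1$ if $\xi_{\omega_1}(\omega_2)\equiv 0\pmod 2$ and $g(\omega_1,\omega_2)=0$ otherwise. Assume the Collatz conjecture holds. Then $g\in\mathcal{G}$, i.e. $$\int_{\mathbf{N}}\Big(\int_{\mathbf{N}} g(\omega_1,\omega_2)\,dP(\omega_2)\Big)dP(\omega_1)=\int_{\mathbf{N}}\Big(\int_{\mathbf{N}} g(\omega_1,\omega_2)\,dP(\omega_1)\Big)dP(\omega_2)$$ (both being equal to $2/3$).
   Context: $\mathbf{N}=\{1,2,3,\dots\}$. A Banach measure is a finitely additive probability measure $P$ defined on all subsets of $\mathbf{N}$ that is shift-invariant: $P(X+1)=P(X)$ for all $X\subseteq\mathbf{N}$, where $X+1=\{x+1:x\in X\}$. For bounded $f:\mathbf{N}\to\mathbb{R}$, $\int f\,dP$ is the integral with respect to the finitely additive measure $P$ (the unique positive linear functional on bounded functions with $\int 1_A\,dP=P(A)$). $\mathcal{G}$ denotes the class of functions $f:\mathbf{N}\times\mathbf{N}\to\mathbb{R}$ for which the two iterated integrals $\int(\int f(\omega_1,\omega_2)\,dP(\omega_2))dP(\omega_1)$ and $\int(\int f(\omega_1,\omega_2)\,dP(\omega_1))dP(\omega_2)$ are equal. The Collatz map $\xi:\mathbf{N}\to\mathbf{N}$ is $\xi(\omega)=\omega/2$ if $\omega$ is even and $\xi(\omega)=3\omega+1$ if $\omega$ is odd; $\xi_n$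 is its $n$-fold iterate. The Collatz conjecture is the statement: for every $\omega\in\mathbf{N}$ there exists $n$ with $\xi_n(\omega)=1$. *)

(* classical reals. N = {1,2,3,...} is modelled by Stdlib's [positive]. *)
From Stdlib Require Import Reals PArith.
Open Scope R_scope.

Definition pset := positive -> Prop.

Definition shift1 (X : pset) : pset := fun y => exists x, X x /\ y = Pos.succ x.

Definition banach_measure (P : pset -> R) : Prop :=
  (forall X, 0 <= P X) /\
  P (fun _ => True) = 1 /\
  (forall X Y : pset, (forall x, X x -> Y x -> False) ->
      P (fun x => X x \/ Y x) = P X + P Y) /\
  (forall X, P (shift1 X) = P X).

Definition bounded (f : positive -> R) : Prop :=
  exists M, forall x, Rabs (f x) <= M.

(* [I] is the integral w.r.t. P: a positive linear functional on the bounded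
   functions with I(1_A) = P(A) for every A (this determines I uniquely on
   bounded functions; its values on unbounded functions are irrelevant). *)
Definition is_integral (P : pset -> R) (I : (positive -> R) -> R) : Prop :=
  (forall f g, bounded f -> bounded g -> I (fun x => f x + g x) = I f + I g) /\
  (forall (c : R) f, bounded f -> I (fun x => c * f x) = c * I f) /\
  (forall f, bounded f -> (forall x, 0 <= f x) -> 0 <= I f) /\
  (forall (A : pset) (f : positive -> R),
      (forall x, (A x -> f x = 1) /\ (~ A x -> f x = 0)) -> I f = P A).

Definition pos_even (p : positive) : bool :=
  match p with xO _ => true | _ => false end.

Definition collatz (w : positive) : positive :=
  if pos_even w then Pos.div2 w else (3 * w + 1)%positive.

Definition collatz_iter (n : nat) (w : positive) : positive := Nat.iter n collatz w.

Definition collatz_conjecture : Prop :=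
  forall w : positive, exists n : nat, collatz_iter n w = 1%positive.

Definition gfun (w1 w2 : positive) : R :=
  if pos_even (collatz_iter (Pos.to_nat w1) w2) then 1 else 0.

(* A Banach measure gives finite sets measure 0 and, by shift invariance, every residue class
   mod m measure 1/m.

   Inner integral over w2: the preimage under the Collatz map of the class r mod 2^(j+1) is the
   class 2r mod 2^(j+2), together with one odd class mod 2^(j+1) when r is even (solve
   3x + 1 = r, 3 being invertible mod 2^(j+1)).  By induction on n, P{w | xi_n(w) even} =: d_n
   satisfies d_0 = 1/2 and d_(n+1) = 1 - d_n / 2, so d_n = 2/3 - (-1/2)^n / 6, and since [I]
   ignores finite sets, integrating over n gives 2/3.

   Inner integral over w1: by the Collatz conjecture, xi_(n0)(w2) = 1 for some n0, after which
   the orbit runs through the cycle 1 -> 4 -> 2; so for n > n0, xi_n(w2) is even iff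
   n is not congruent to n0 mod 3, a set of measure 2/3. *)

From Stdlib Require Import Reals PArith ZArith Lia Lra FunctionalExtensionality PropExtensionality Classical.
(* Imported after Reals so that [bounded] is [Defs.bounded], not Rtopology's. *)
From Pilot Require Import Defs.
Open Scope R_scope.

Lemma shift1_iff (X : pset) y : shift1 X y <-> y <> 1%positive /\ X (Pos.pred y).
Proof.
  split.
  - intros [x [Hx ->]]. rewrite Pos.pred_succ. split; [apply Pos.succ_not_1 | exact Hx].
  - intros [Hy Hx]. exists (Pos.pred y). split; [exact Hx | symmetry; apply Pos.succ_pred, Hy].
Qed.

Lemma Pos2Nat_pred y : y <> 1%positive -> Pos.to_nat y = S (Pos.to_nat (Pos.pred y)).
Proof. intros Hy. rewrite <- Pos2Nat.inj_succ, Pos.succ_pred; auto. Qed.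

Lemma mod_eq_iff (a m r : Z) : (0 <= r < m)%Z -> (a mod m = r)%Z <-> exists q, a = (q * m + r)%Z.
Proof.
  intros Hr. split.
  - intros H. exists (a / m)%Z. rewrite <- H, Z.mul_comm. apply Z.div_mod. lia.
  - intros [q ->]. rewrite Z.add_comm, Z_mod_plus_full. apply Z.mod_small; auto.
Qed.

Lemma pos_even_odd x : pos_even x = negb (Z.odd (Z.pos x)).
Proof. destruct x; reflexivity. Qed.

Lemma collatz_cases x :
  (Z.odd (Z.pos x) = false /\ Z.pos x = (2 * Z.pos (collatz x))%Z) \/
  (Z.odd (Z.pos x) = true /\ Z.pos (collatz x) = (3 * Z.pos x + 1)%Z).
Proof. destruct x; [right | left | right]; split; reflexivity. Qed.

Lemma collatz_iter_add a b w : collatz_iter (a + b) w = collatz_iter a (collatz_iter b w).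
Proof. apply Nat.iter_add. Qed.

Lemma collatz_iter_one_even k : pos_even (collatz_iter k 1) = negb (k mod 3 =? 0)%nat.
Proof.
  assert (Hcycle : forall q, collatz_iter (3 * q) 1 = 1%positive).
  { induction q as [|q IH]; [reflexivity|].
    replace (3 * S q)%nat with (3 + 3 * q)%nat by lia. rewrite collatz_iter_add, IH. reflexivity. }
  rewrite (Nat.div_mod_eq k 3) at 1. rewrite Nat.add_comm, collatz_iter_add, Hcycle.
  pose proof (Nat.mod_upper_bound k 3 ltac:(lia)).
  destruct (k mod 3) as [|[|[|]]]; try reflexivity; lia.
Qed.

Lemma odd_mod_double a m : m <> 0%Z -> Z.odd (a mod (2 * m)) = Z.odd a.
Proof.
  intros Hm. rewrite (Z.div_mod a (2 * m)) at 2 by lia.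
  rewrite Z.odd_add, <- Z.mul_assoc, Z.odd_mul. simpl. destruct (Z.odd _); reflexivity.
Qed.

Lemma mod_double_iff y m r : (0 <= r < m)%Z ->
  (y mod m = r)%Z <-> ((2 * y) mod (2 * m) = 2 * r)%Z.
Proof. intros Hr. rewrite !mod_eq_iff by lia. split; intros [q Hq]; exists q; lia. Qed.

Lemma collatz_mod_iff x m r : (0 <= r < m)%Z ->
  (Z.pos (collatz x) mod m = r)%Z <->
  (Z.pos x mod (2 * m) = 2 * r)%Z \/ (Z.odd (Z.pos x) = true /\ ((3 * Z.pos x + 1) mod m = r)%Z).
Proof.
  intros Hr. destruct (collatz_cases x) as [[Hodd Hx] | [Hodd Hx]]; rewrite Hodd, Hx.
  - rewrite <- mod_double_iff by lia.
    split; [auto | intros [H | [H _]]; [exact H | discriminate]].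
  - split; [auto|]. intros [H | [_ H]]; [|exact H].
    rewrite <- (odd_mod_double _ m), H, Z.odd_mul in Hodd by lia. discriminate.
Qed.

Lemma affine_mod_iff x m r t k : (0 <= r < m)%Z -> (3 * t = 1 + k * m)%Z ->
  ((3 * x + 1) mod m = r)%Z <-> (x mod m = (t * (r - 1)) mod m)%Z.
Proof.
  intros Hr Ht. split.
  - rewrite mod_eq_iff by auto. intros [q Hq].
    assert (Hx : x = ((t * q - x * k) * m + t * (r - 1))%Z) by nia.
    rewrite Hx at 1. rewrite Z.add_comm, Z_mod_plus_full. reflexivity.
  - intros H. apply mod_eq_iff; auto.
    pose proof (Z.div_mod x m ltac:(lia)). pose proof (Z.div_mod (t * (r - 1)) m ltac:(lia)).
    exists (3 * (x / m - (t * (r - 1)) / m) + k * (r - 1))%Z. nia.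
Qed.

Definition pow2 (j : nat) : Z := 2 ^ Z.of_nat j.

Lemma pow2_succ j : pow2 (S j) = (2 * pow2 j)%Z.
Proof. unfold pow2. rewrite Nat2Z.inj_succ, Z.pow_succ_r by lia. reflexivity. Qed.

Lemma pow2_pos j : (0 < pow2 j)%Z.
Proof. apply Z.pow_pos_nonneg; lia. Qed.

Lemma IZR_pow2 j : IZR (pow2 j) = 2 ^ j.
Proof. unfold pow2. rewrite <- pow_IZR. reflexivity. Qed.

Lemma odd_mod_pow2 a j : Z.odd (a mod pow2 (S j)) = Z.odd a.
Proof. rewrite pow2_succ. apply odd_mod_double. pose proof (pow2_pos j). lia. Qed.

Lemma three_invertible_mod_pow2 j : exists t k, (3 * t = 1 + k * pow2 j)%Z.
Proof.
  induction j as [|j [t [k H]]]; [exists 1%Z, 2%Z; reflexivity|].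
  rewrite pow2_succ. destruct (Z.Even_or_Odd k) as [[k' ->] | [k' ->]].
  - exists t, k'. lia.
  - exists (t + pow2 j)%Z, (k' + 2)%Z. lia.
Qed.

Lemma collatz_mod_pow2_odd x j r : (0 <= r < pow2 (S j))%Z -> Z.odd r = true ->
  (Z.pos (collatz x) mod pow2 (S j) = r)%Z <-> (Z.pos x mod pow2 (S (S j)) = 2 * r)%Z.
Proof.
  intros Hr Hodd. rewrite collatz_mod_iff, <- pow2_succ by auto.
  split; [|auto]. intros [H | [Hx H]]; [exact H|].
  rewrite <- H, odd_mod_pow2, Z.odd_add, Z.odd_mul, Hx in Hodd. discriminate.
Qed.

Lemma odd_inverse_residue j r t k : Z.odd r = false -> (3 * t = 1 + k * pow2 (S j))%Z ->
  Z.odd ((t * (r - 1)) mod pow2 (S j)) = true.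
Proof.
  intros Hodd Ht.
  assert (Htodd : Z.odd t = true).
  { destruct (Z.Even_or_Odd t) as [[u Hu] | [u Hu]]; subst t.
    - rewrite pow2_succ in Ht. lia.
    - rewrite Z.odd_add, Z.odd_mul. reflexivity. }
  rewrite odd_mod_pow2, Z.odd_mul, Z.odd_sub, Hodd, Htodd. reflexivity.
Qed.

Lemma collatz_mod_pow2_even x j r t k : (0 <= r < pow2 (S j))%Z -> Z.odd r = false ->
  (3 * t = 1 + k * pow2 (S j))%Z ->
  (Z.pos (collatz x) mod pow2 (S j) = r)%Z <->
  (Z.pos x mod pow2 (S (S j)) = 2 * r)%Z \/ (Z.pos x mod pow2 (S j) = (t * (r - 1)) mod pow2 (S j))%Z.
Proof.
  intros Hr Hodd Ht. rewrite collatz_mod_iff, <- pow2_succ, (affine_mod_iff _ _ _ t k) by auto.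
  pose proof (odd_inverse_residue j r t k Hodd Ht) as Hs.
  split; intros [H | H]; auto; right; [apply H|]. split; [|exact H].
  rewrite <- (odd_mod_pow2 _ j), H. exact Hs.
Qed.

Definition iterate_residue (n : nat) (m r : Z) : pset :=
  fun w => (Z.pos (collatz_iter n w) mod m = r)%Z.

Definition even_density (n : nat) : R := 2 / 3 - / 6 * (- / 2) ^ n.

Lemma even_density_succ n : even_density (S n) = 1 - even_density n / 2.
Proof. unfold even_density. simpl. field. Qed.

Lemma integral_ext (I : (positive -> R) -> R) f g : (forall x, f x = g x) -> I f = I g.
Proof. intros H. f_equal. apply functional_extensionality, H. Qed.

Lemma bounded_const (c : R) : bounded (fun _ => c).
Proof. exists (Rabs c). intros _. lra. Qed.

Lemma bounded_scal (c : R) f : bounded f -> bounded (fun x => c * f x).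
Proof.
  intros [M HM]. exists (Rabs c * M). intro x. rewrite Rabs_mult.
  apply Rmult_le_compat_l; [apply Rabs_pos | apply HM].
Qed.

Lemma bounded_add f g : bounded f -> bounded g -> bounded (fun x => f x + g x).
Proof.
  intros [M HM] [N HN]. exists (M + N). intro x.
  eapply Rle_trans; [apply Rabs_triang|]. specialize (HM x). specialize (HN x). lra.
Qed.

Definition singleton (k : nat) : pset := fun w => Pos.to_nat w = k.
Definition initial_segment (K : nat) : pset := fun w => (Pos.to_nat w <= K)%nat.
Definition residue_class (m r : Z) : pset := fun w => (Z.pos w mod m = r)%Z.

Section BanachMeasure.

Variable P : pset -> R.
Hypothesis hP : banach_measure P.

Let measure_nonneg : forall X, 0 <= P X := proj1 hP.
Let measure_full : P (fun _ => True) = 1 := proj1 (proj2 hP).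
Let measure_union : forall X Y : pset, (forall x, X x -> Y x -> False) ->
  P (fun x => X x \/ Y x) = P X + P Y := proj1 (proj2 (proj2 hP)).
Let measure_shift : forall X, P (shift1 X) = P X := proj2 (proj2 (proj2 hP)).

Lemma measure_ext (A B : pset) : (forall x, A x <-> B x) -> P A = P B.
Proof.
  intros H. f_equal. apply functional_extensionality; intro x.
  apply propositional_extensionality, H.
Qed.

Lemma measure_empty : P (fun _ => False) = 0.
Proof.
  assert (E := measure_union (fun _ => False) (fun _ => False) (fun _ f _ => f)).
  cbv beta in E. rewrite (measure_ext (fun _ => False \/ False) (fun _ => False)) in E by tauto.
  lra.
Qed.

Lemma measure_split (A C : pset) :
  P C = P (fun x => C x /\ A x) + P (fun x => C x /\ ~ A x).
Proof.
  rewrite <- measure_union by (intros x [_ a] [_ na]; auto).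
  apply measure_ext; intro x; destruct (classic (A x)); tauto.
Qed.

Lemma measure_mono (A B : pset) : (forall x, A x -> B x) -> P A <= P B.
Proof.
  intros H. rewrite (measure_split A B), (measure_ext (fun x => B x /\ A x) A) by firstorder.
  pose proof (measure_nonneg (fun x => B x /\ ~ A x)). lra.
Qed.

Lemma measure_compl (A : pset) : P (fun x => ~ A x) = 1 - P A.
Proof.
  rewrite <- measure_full, (measure_split A (fun _ => True)).
  rewrite (measure_ext (fun x => True /\ A x) A), (measure_ext (fun x => True /\ ~ A x) (fun x => ~ A x))
    by tauto.
  ring.
Qed.

Lemma measure_singleton k : P (singleton (S k)) = P (singleton 1).
Proof.
  induction k as [|k IH]; [reflexivity|]. rewrite <- IH, <- (measure_shift (singleton (S k))).
  apply measure_ext; intro y. rewrite shift1_iff. unfold singleton. split.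
  - intros Hy. assert (y <> 1%positive) by (intros ->; discriminate).
    rewrite Pos2Nat_pred in Hy by auto. split; auto; lia.
  - intros [Hy E]. rewrite Pos2Nat_pred by auto. lia.
Qed.

Lemma measure_initial_segment_eq K : P (initial_segment K) = INR K * P (singleton 1).
Proof.
  induction K as [|K IH].
  - rewrite (measure_ext _ (fun _ => False)), measure_empty; [simpl; ring|].
    intro x; unfold initial_segment; pose proof (Pos2Nat.is_pos x); lia.
  - rewrite (measure_ext _ (fun x => initial_segment K x \/ singleton (S K) x))
      by (unfold initial_segment, singleton; intros; lia).
    rewrite measure_union by (unfold initial_segment, singleton; intros; lia).
    rewrite IH, (measure_singleton K), S_INR. ring.
Qed.

(* All singletons have the measure of {1}, and [K] of them fit into a set of measure <= 1. *)
Lemma measure_initial_segment K : P (initial_segment K) = 0.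
Proof.
  rewrite measure_initial_segment_eq.
  destruct (Rle_lt_or_eq_dec 0 _ (measure_nonneg (singleton 1))) as [Hpos|<-]; [|ring].
  exfalso. destruct (archimed_cor1 _ Hpos) as [N [HN HN0]].
  assert (HNpos : 0 < INR N) by (apply lt_0_INR; lia).
  assert (Hle : P (initial_segment N) <= 1) by (rewrite <- measure_full; apply measure_mono; auto).
  rewrite measure_initial_segment_eq in Hle.
  apply (Rmult_lt_compat_l (INR N)) in HN; auto. rewrite Rinv_r in HN by lra. lra.
Qed.

Lemma measure_eventually_eq (A B : pset) K :
  (forall w, (K < Pos.to_nat w)%nat -> (A w <-> B w)) -> P A = P B.
Proof.
  intros H.
  assert (Hnull : forall C : pset, P (fun w => C w /\ initial_segment K w) = 0).
  { intro C. apply Rle_antisym; auto. rewrite <- (measure_initial_segment K).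
    apply measure_mono; tauto. }
  rewrite (measure_split (initial_segment K) A), (measure_split (initial_segment K) B), !Hnull.
  f_equal. apply measure_ext; intro w. unfold initial_segment.
  destruct (Nat.le_gt_cases (Pos.to_nat w) K) as [Hw|Hw]; [tauto|]. specialize (H w Hw). tauto.
Qed.

Lemma measure_residue_class_succ m r : (0 <= r)%Z -> (r + 1 < m)%Z ->
  P (residue_class m (r + 1)) = P (residue_class m r).
Proof.
  intros Hr Hm. rewrite <- (measure_shift (residue_class m r)). apply (measure_eventually_eq _ _ 1).
  intros y Hy. assert (Hy1 : y <> 1%positive) by (intros ->; simpl in Hy; lia).
  rewrite shift1_iff. unfold residue_class.
  rewrite 2!mod_eq_iff, Pos2Z.inj_pred by (auto; lia).
  split; [intros [q Hq]; split; auto; exists q; lia | intros [_ [q Hq]]; exists q; lia].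
Qed.

Lemma measure_residue_class_eq m r : (0 <= r < m)%Z ->
  P (residue_class m r) = P (residue_class m 0).
Proof.
  intros Hr. rewrite <- (Z2Nat.id r) in * by lia.
  induction (Z.to_nat r) as [|k IH]; [reflexivity|].
  rewrite Nat2Z.inj_succ, <- Z.add_1_r in *. rewrite measure_residue_class_succ by lia. apply IH. lia.
Qed.

Lemma measure_residue_class m r : (0 < m)%Z -> (0 <= r < m)%Z ->
  P (residue_class m r) = / IZR m.
Proof.
  intros Hm Hr.
  assert (Hlow : forall k, (Z.of_nat k <= m)%Z ->
            P (fun w => (Z.pos w mod m < Z.of_nat k)%Z) = INR k * P (residue_class m 0)).
  { induction k as [|k IH]; intros Hk.
    - rewrite (measure_ext _ (fun _ => False)), measure_empty; [simpl; ring|].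
      intro x; pose proof (Z.mod_pos_bound (Z.pos x) m Hm); lia.
    - rewrite (measure_ext _ (fun w => (Z.pos w mod m < Z.of_nat k)%Z \/ residue_class m (Z.of_nat k) w))
        by (unfold residue_class; intros; lia).
      rewrite measure_union by (unfold residue_class; intros; lia).
      rewrite IH, (measure_residue_class_eq m (Z.of_nat k)), S_INR by lia. ring. }
  specialize (Hlow (Z.to_nat m) ltac:(lia)).
  rewrite (measure_ext _ (fun _ => True)), measure_full, INR_IZR_INZ, Z2Nat.id in Hlow by
    (lia || (intro x; pose proof (Z.mod_pos_bound (Z.pos x) m Hm); lia)).
  assert (IZR m <> 0) by (apply not_0_IZR; lia).
  rewrite measure_residue_class_eq by auto.
  apply (Rmult_eq_reg_l (IZR m)); auto. rewrite <- Hlow. field; auto.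
Qed.

Lemma measure_iterate_residue n : forall j r, (0 <= r < pow2 (S j))%Z ->
  P (iterate_residue n (pow2 (S j)) r) =
  (if Z.odd r then 1 - even_density n else even_density n) / 2 ^ j.
Proof.
  induction n as [|n IH]; intros j r Hr.
  - change (iterate_residue 0) with residue_class.
    rewrite measure_residue_class, IZR_pow2 by (pose proof (pow2_pos (S j)); lia).
    unfold even_density. destruct (Z.odd r); simpl; field; apply pow_nonzero; lra.
  - assert (H2r : (0 <= 2 * r < pow2 (S (S j)))%Z) by (rewrite (pow2_succ (S j)); lia).
    assert (Hodd2r : Z.odd (2 * r) = false) by (rewrite Z.odd_mul; reflexivity).
    assert (Hpow : 2 ^ j <> 0) by (apply pow_nonzero; lra).
    destruct (Z.odd r) eqn:Hodd.
    + rewrite (measure_ext _ (iterate_residue n (pow2 (S (S j))) (2 * r)))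
        by (intro w; apply collatz_mod_pow2_odd; auto).
      rewrite IH, Hodd2r, even_density_succ by auto. simpl. field. auto.
    + destruct (three_invertible_mod_pow2 (S j)) as [t [k Ht]].
      set (s := ((t * (r - 1)) mod pow2 (S j))%Z).
      assert (Hs : Z.odd s = true) by (apply (odd_inverse_residue j r t k); auto).
      assert (Hs_bound : (0 <= s < pow2 (S j))%Z) by (apply Z.mod_pos_bound, pow2_pos).
      rewrite (measure_ext _ (fun w => iterate_residue n (pow2 (S (S j))) (2 * r) w
                                       \/ iterate_residue n (pow2 (S j)) s w))
        by (intro w; apply (collatz_mod_pow2_even _ _ _ t k); auto).
      rewrite measure_union.
      * rewrite IH, Hodd2r, IH, Hs, even_density_succ by auto.
        simpl. field. auto.
      * intros w A B. unfold iterate_residue in A, B.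
        apply (f_equal Z.odd) in A. apply (f_equal Z.odd) in B.
        rewrite odd_mod_pow2 in A, B. rewrite Hodd2r in A.
        rewrite B, Hs in A. discriminate.
Qed.

Lemma measure_iterate_even n : P (fun w => pos_even (collatz_iter n w) = true) = even_density n.
Proof.
  rewrite (measure_ext _ (iterate_residue n (pow2 1) 0)).
  - rewrite measure_iterate_residue by (compute; split; congruence). simpl. field.
  - intro w. unfold iterate_residue. change (pow2 1) with 2%Z.
    rewrite pos_even_odd, Zmod_odd. destruct (Z.odd _); simpl; split; congruence.
Qed.

Lemma mod3_sub_eq0_iff a n : (n <= a)%nat -> ((a - n) mod 3 = 0 <-> a mod 3 = n mod 3)%nat.
Proof.
  intros Hn.
  pose proof (Nat.div_mod_eq (a - n) 3). pose proof (Nat.div_mod_eq a 3). pose proof (Nat.div_mod_eq n 3).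
  pose proof (Nat.mod_upper_bound (a - n) 3). pose proof (Nat.mod_upper_bound a 3).
  pose proof (Nat.mod_upper_bound n 3). lia.
Qed.

Lemma measure_even_iterates w n0 : collatz_iter n0 w = 1%positive ->
  P (fun k => pos_even (collatz_iter (Pos.to_nat k) w) = true) = 2 / 3.
Proof.
  intros Hn0. set (r := Z.of_nat (n0 mod 3)).
  rewrite (measure_eventually_eq _ (fun k => ~ residue_class 3 r k) n0).
  - rewrite measure_compl, measure_residue_class by (unfold r; pose proof (Nat.mod_upper_bound n0 3); lia).
    simpl. field.
  - intros k Hk. unfold residue_class, r.
    replace (Pos.to_nat k) with (Pos.to_nat k - n0 + n0)%nat at 1 by lia.
    rewrite collatz_iter_add, Hn0, collatz_iter_one_even.
    rewrite <- positive_nat_Z. change 3%Z with (Z.of_nat 3).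
    rewrite <- Nat2Z.inj_mod, Nat2Z.inj_iff, <- mod3_sub_eq0_iff by lia.
    destruct (Nat.eqb_spec ((Pos.to_nat k - n0) mod 3) 0); simpl; intuition congruence.
Qed.

Variable I : (positive -> R) -> R.
Hypothesis hI : is_integral P I.

Let integral_add : forall f g, bounded f -> bounded g -> I (fun x => f x + g x) = I f + I g :=
  proj1 hI.
Let integral_scal : forall c f, bounded f -> I (fun x => c * f x) = c * I f := proj1 (proj2 hI).
Let integral_nonneg : forall f, bounded f -> (forall x, 0 <= f x) -> 0 <= I f :=
  proj1 (proj2 (proj2 hI)).
Let integral_indicator : forall A f, (forall x, (A x -> f x = 1) /\ (~ A x -> f x = 0)) -> I f = P A :=
  proj2 (proj2 (proj2 hI)).

Lemma integral_const (c : R) : I (fun _ => c) = c.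
Proof.
  rewrite (integral_ext I _ (fun x => c * (fun _ => 1) x)) by (intro; ring).
  rewrite integral_scal, (integral_indicator (fun _ => True)), measure_full by
    (apply bounded_const || tauto).
  ring.
Qed.

Lemma integral_abs_le f g : bounded f -> bounded g -> (forall x, Rabs (f x) <= g x) ->
  Rabs (I f) <= I g.
Proof.
  intros bf bg Hfg.
  assert (Hsub : 0 <= I (fun x => g x + (fun y => -1 * f y) x)).
  { apply integral_nonneg; [apply bounded_add, bounded_scal; auto|].
    intro x. pose proof (Rle_abs (f x)). specialize (Hfg x). lra. }
  assert (Hadd : 0 <= I (fun x => g x + f x)).
  { apply integral_nonneg; [apply bounded_add; auto|].
    intro x. pose proof (Rle_abs (- f x)). rewrite Rabs_Ropp in *. specialize (Hfg x). lra. }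
  rewrite integral_add, integral_scal in Hsub by (try apply bounded_scal; auto).
  rewrite integral_add in Hadd by auto.
  apply Rabs_le. lra.
Qed.

(* [I] ignores finite sets: compare [|f|] with [eps] plus a multiple of the indicator of an
   initial segment. *)
Lemma integral_vanishing_at_infinity f : bounded f ->
  (forall eps, 0 < eps -> exists K, forall x, (K < Pos.to_nat x)%nat -> Rabs (f x) <= eps) ->
  I f = 0.
Proof.
  intros bf Hf.
  assert (Hsmall : forall eps, 0 < eps -> Rabs (I f) <= eps).
  { intros eps Heps. destruct (Hf eps Heps) as [K HK]. destruct bf as [M HM].
    set (chi := fun x => if Nat.leb (Pos.to_nat x) K then 1 else 0).
    assert (bchi : bounded chi).
    { exists 1. intro x. unfold chi. destruct (Nat.leb _ _); rewrite ?Rabs_R1, ?Rabs_R0; lra. }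
    assert (Ichi : I chi = 0).
    { rewrite (integral_indicator (initial_segment K)); [apply measure_initial_segment|].
      intro x. unfold chi, initial_segment.
      destruct (Nat.leb_spec (Pos.to_nat x) K); split; intros; auto; lia. }
    assert (HM0 : 0 <= M) by (eapply Rle_trans; [apply Rabs_pos | apply (HM 1%positive)]).
    replace eps with (I (fun x => (fun _ => eps) x + (fun y => M * chi y) x)).
    - apply integral_abs_le; [exists M; auto | apply bounded_add, bounded_scal; auto using bounded_const |].
      intro x. unfold chi. destruct (Nat.leb_spec (Pos.to_nat x) K) as [Hx | Hx].
      + specialize (HM x). lra.
      + specialize (HK x Hx). lra.
    - rewrite integral_add, integral_scal, Ichi, integral_const by (auto using bounded_const, bounded_scal).
      ring. }
  destruct (Req_dec (I f) 0) as [|Hne]; auto.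
  pose proof (Rabs_pos_lt _ Hne). specialize (Hsmall (Rabs (I f) / 2) ltac:(lra)). lra.
Qed.

Lemma integral_even_density : I (fun w => even_density (Pos.to_nat w)) = 2 / 3.
Proof.
  set (h := fun w : positive => (- / 2) ^ Pos.to_nat w).
  assert (Habs : forall w, Rabs (h w) <= (/ 2) ^ Pos.to_nat w).
  { intro w. unfold h. rewrite <- RPow_abs, Rabs_Ropp, Rabs_pos_eq by lra. lra. }
  assert (bh : bounded h).
  { exists 1. intro w. eapply Rle_trans; [apply Habs | rewrite <- (pow1 (Pos.to_nat w)); apply pow_incr; lra]. }
  assert (Ih : I h = 0).
  { apply integral_vanishing_at_infinity; auto. intros eps Heps.
    destruct (pow_lt_1_zero (/ 2) ltac:(rewrite Rabs_pos_eq; lra) eps Heps) as [N HN].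
    exists N. intros w Hw. eapply Rle_trans; [apply Habs|].
    specialize (HN (Pos.to_nat w) ltac:(lia)). rewrite Rabs_pos_eq in HN by (apply pow_le; lra). lra. }
  rewrite (integral_ext I _ (fun w => (fun _ => 2 / 3) w + (fun w => - / 6 * h w) w))
    by (intro; unfold even_density, h; ring).
  rewrite integral_add, integral_scal, Ih, integral_const by auto using bounded_const, bounded_scal.
  ring.
Qed.

Lemma integral_gfun_row w1 : I (fun w2 => gfun w1 w2) = even_density (Pos.to_nat w1).
Proof.
  rewrite <- measure_iterate_even. apply integral_indicator.
  intro w2. unfold gfun. destruct (pos_even _); split; intros; congruence || tauto.
Qed.

Lemma integral_gfun_column w2 : collatz_conjecture -> I (fun w1 => gfun w1 w2) = 2 / 3.
Proof.
  intros hC. destruct (hC w2) as [n0 Hn0].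
  rewrite <- (measure_even_iterates w2 n0 Hn0). apply integral_indicator.
  intro w1. unfold gfun. destruct (pos_even _); split; intros; congruence || tauto.
Qed.

End BanachMeasure.

Theorem theorem5p1 (P : pset -> R) (I : (positive -> R) -> R)
  (hP : banach_measure P) (hI : is_integral P I)
  (hC : collatz_conjecture) :
  I (fun w1 => I (fun w2 => gfun w1 w2)) = I (fun w2 => I (fun w1 => gfun w1 w2))
  /\ I (fun w1 => I (fun w2 => gfun w1 w2)) = 2 / 3.
Proof.
  assert (Hrows : I (fun w1 => I (fun w2 => gfun w1 w2)) = 2 / 3).
  { rewrite (integral_ext I _ (fun w1 => even_density (Pos.to_nat w1)))
      by (intro; apply (integral_gfun_row P hP I hI)).
    apply (integral_even_density P hP I hI). }
  assert (Hcols : I (fun w2 => I (fun w1 => gfun w1 w2)) = 2 / 3).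
  { rewrite (integral_ext I _ (fun _ => 2 / 3))
      by (intro; apply (integral_gfun_column P hP I hI), hC).
    apply (integral_const P hP I hI). }
  split; congruence.
Qed.
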